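(* Let $S$ be a finite set, $X\subseteq S$ and $x\in X$, and let $\mathcal{P}=\{X,X\setminus\{x\}\}$. Then $\mathcal{P}\in\bullet(\{2^Y\mid\emptyset\subsetneq Y\subseteq X\})$.
   Context: Here $2^Y=\{W\subseteq S\mid W\subseteq Y\}$ (note that $2^\emptyset=\{\emptyset\}$ is excluded from the generating family). For sets $A,B$, $A\,\dot\cup\,B=A\cup B$ is defined only when $A\cap B=\emptyset$, and $A\,\dot\setminus\,B=A\setminus B$ is defined only when $B\subseteq A$. For a finite family $\mathcal{G}$ of sets, $\bullet(\mathcal{G})$ is the smallest family of sets containing $\emptyset$ and every member of $\mathcal{G}$ and closed under all well-defined disjoint unions and subset complements. *)

From mathcomp Require Import all_boot.
Set Implicit Arguments. Unset Strict Implicit. Unset Printing Implicit Defensive.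

(* The finite ground set S is the finType T; sets are {set T}, families of
   sets are {set {set T}}, generating collections are {set {set {set T}}}. *)

Definition pow2 (T : finType) (Y : {set T}) : {set {set T}} := powerset Y.

Inductive bullet (T : finType) (G : {set {set {set T}}}) : {set {set T}} -> Prop :=
| bullet_empty : bullet G set0
| bullet_gen A : A \in G -> bullet G A
| bullet_dunion A B : bullet G A -> bullet G B -> [disjoint A & B] ->
    bullet G (A :|: B)
| bullet_sdiff A B : bullet G A -> bullet G B -> B \subset A ->
    bullet G (A :\: B).

Definition genX (T : finType) (X : {set T}) : {set {set {set T}}} :=
  [set pow2 Y | Y in [set Y in powerset X | Y != set0]].

From mathcomp Require Import all_boot.

Set Implicit Arguments.
Unset Strict Implicit.
Unset Printing Implicit Defensive.

(* [X; X \ x] is the interval [X \ x, X] of the subset lattice.  Intervals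
   [Z, Y] with Z a proper subset of Y lie in bullet: for Z = set0 the interval
   is a generator 2^Y, and for z in Z removing the sets that avoid z gives
   [Z, Y] = [Z \ z, Y] \ [Z \ z, Y \ z], so induction on #|Z| applies. *)

Section SetsBetween.

Variable T : finType.
Implicit Types (X Y Z W : {set T}) (x z : T).

Lemma subsetD1l Z W z :
  z \in Z -> (Z \subset W) = (Z :\ z \subset W) && (z \in W).
Proof. by move=> zZ; rewrite -{1}(setD1K zZ) subUset sub1set andbC. Qed.

Definition sets_between Z Y : {set {set T}} := [set W in powerset Y | Z \subset W].

Lemma in_sets_between Z Y W :
  (W \in sets_between Z Y) = (W \subset Y) && (Z \subset W).
Proof. by rewrite inE powersetE. Qed.

Lemma sets_between0 Y : sets_between set0 Y = pow2 Y.
Proof. by apply/setP => W; rewrite in_sets_between sub0set andbT inE. Qed.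

Lemma sets_betweenS Z1 Z2 Y1 Y2 :
  Z2 \subset Z1 -> Y1 \subset Y2 ->
  sets_between Z1 Y1 \subset sets_between Z2 Y2.
Proof.
move=> Z21 Y12; apply/subsetP => W; rewrite !in_sets_between => /andP[WY1 Z1W].
by rewrite (subset_trans WY1) ?(subset_trans Z21).
Qed.

Lemma sets_betweenD1 Z Y z :
  z \in Z -> Z \subset Y ->
  sets_between Z Y = sets_between (Z :\ z) Y :\: sets_between (Z :\ z) (Y :\ z).
Proof.
move=> zZ ZY; apply/setP => W; rewrite in_setD !in_sets_between subsetD1.
rewrite (subsetD1l W zZ).
by case: (W \subset Y) (z \in W) (Z :\ z \subset W) => [] [] [].
Qed.

Lemma properD1S Z Y z : z \in Z -> Z \proper Y -> Z :\ z \proper Y :\ z.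
Proof.
move=> zZ /properP[ZY [y yY yNZ]]; apply/properP; split; first exact: setSD.
exists y; last by rewrite inE (negbTE yNZ) andbF.
by rewrite !inE yY andbT; apply: contraNneq yNZ => ->.
Qed.

Lemma sets_between_setD1 X x : x \in X -> sets_between (X :\ x) X = [set X; X :\ x].
Proof.
move=> xX; apply/setP => W; rewrite in_sets_between !inE !eqEsubset subsetD1.
rewrite (subsetD1l W xX).
by case: (W \subset X) (x \in W) (X :\ x \subset W) => [] [] [].
Qed.

Lemma pow2_in_genX X Y : Y \subset X -> Y != set0 -> pow2 Y \in genX X.
Proof. by move=> YX Y0; apply/imsetP; exists Y; rewrite // !inE YX. Qed.

Lemma bullet_sets_between X Z Y :
  Z \proper Y -> Y \subset X -> bullet (genX X) (sets_between Z Y).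
Proof.
have [n] := ubnP #|Z|; elim: n Z Y => // n IHn Z Y ltZn ZY YX.
have [Z0 | [z zZ]] := set_0Vmem Z.
  rewrite Z0 proper0 in ZY.
  by rewrite Z0 sets_between0; apply/bullet_gen/pow2_in_genX.
have ltZzn : #|Z :\ z| < n by rewrite (leq_trans (proper_card (properD1 zZ))).
rewrite (sets_betweenD1 zZ (proper_sub ZY)); apply: bullet_sdiff.
- by apply: IHn; rewrite // (sub_proper_trans (subD1set Z z)).
- by apply: IHn; rewrite ?properD1S // (subset_trans (subD1set Y z)).
- by rewrite sets_betweenS ?subD1set.
Qed.

End SetsBetween.

Theorem lemma6p11 (T : finType) (X : {set T}) (x : T) (hx : x \in X) :
  bullet (genX X) [set X; X :\ x].
Proof.
rewrite -sets_between_setD1 //.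
exact: bullet_sets_between (properD1 hx) (subxx X).
Qed.
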